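(* Let $E$ be a congruence on $\overline{\boldsymbol{T}(X_1,\ldots,X_n)}$, $F$ a congruence on $\overline{\boldsymbol{T}(Y_1,\ldots,Y_m)}$, $V:=\boldsymbol{V}(E)$, $W:=\boldsymbol{V}(F)$, $\pi_E$ the natural surjection onto $\overline{\boldsymbol{T}(X_1,\ldots,X_n)}/E$, and $\psi:\overline{\boldsymbol{T}(X_1,\ldots,X_n)}/E\to\overline{\boldsymbol{T}(Y_1,\ldots,Y_m)}/F$ a $\boldsymbol{T}$-algebra homomorphism; let $\theta:W\to\boldsymbol{T}^n$, $y\mapsto(\psi(\pi_E(X_1))(y),\ldots,\psi(\pi_E(X_n))(y))$. If $\psi$ is an isomorphism, then $V$ and $W$ are homeomorphic via $\theta$.
   Context: $\boldsymbol{T}=\mathbb{R}\cup\{-\infty\}$ with $a\oplus b=\max\{a,b\}$, $a\odot b=a+b$. $\overline{\boldsymbol{T}[X_1,\ldots,X_n]}$ is the tropical polynomial semiring modulo identifying polynomials defining the same function $\boldsymbol{T}^n\to\boldsymbol{T}$; it is cancellative and $\overline{\boldsymbol{T}(X_1,\ldots,X_n)}$ is its semifield of fractions ($X_i$ denoting the image of the variable). Each element defines a function $\mathbb{R}^n\to\boldsymbol{T}$ (quotients evaluated as differences). $\boldsymbol{T}$-algebras are semirings with a semiring homomorphism from $\boldsymbol{T}$; homomorphisms are compatible semiring homomorphisms, isomorphisms the bijective ones. A congruence is an equivalence relation compatible with both operations. $\boldsymbol{V}(E)=\{x\in\mathbb{R}^n\mid f(x)=g(x)\ \forall(f,g)\in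 E\}$; an element of the quotient by $F$ is evaluated at points of $\boldsymbol{V}(F)$ via any representative (well defined). Subsets of $\mathbb{R}^n$, $\mathbb{R}^m$ carry the Euclidean topology. *)

From HB Require Import structures.
From mathcomp Require Import all_boot all_order all_algebra.
From mathcomp Require Import all_classical all_reals all_analysis.
Set Implicit Arguments. Unset Strict Implicit. Unset Printing Implicit Defensive.
Import Order.TTheory GRing.Theory Num.Theory.
Import numFieldNormedType.Exports.
Local Open Scope classical_set_scope.
Local Open Scope ring_scope.

(* T = R ∪ {-oo} is modelled inside \bar R (the value +oo never occurs). *)

(* A tropical polynomial in n variables with real (finite) coefficients:
   a finite list of monomials c ⊙ X^a (monomials with coefficient -oo are
   simply omitted; the empty list is the -oo polynomial). *)
Definition tpoly (R : realType) (n : nat) := seq (R * ('I_n -> nat)).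

Definition peval (R : realType) (n : nat) (p : tpoly R n) (x : 'rV[R]_n) : \bar R :=
  \big[maxe/-oo%E]_(t <- p) (t.1 + \sum_(i < n) (t.2 i)%:R * x ord0 i)%:E.

(* Elements of the semifield  \overline{T(X_1..X_n)}  are identified with the
   functions R^n -> T they define: quotients p/q (q <> -oo) evaluated as
   differences p(x) - q(x). *)
Definition is_tfrac (R : realType) (n : nat) (h : 'rV[R]_n -> \bar R) : Prop :=
  exists (p q : tpoly R n), q <> [::] /\ forall x, h x = (peval p x - peval q x)%E.

Definition toplus (R : realType) (n : nat) (f g : 'rV[R]_n -> \bar R) :=
  fun x => maxe (f x) (g x).
Definition totimes (R : realType) (n : nat) (f g : 'rV[R]_n -> \bar R) :=
  fun x => (f x + g x)%E.
Definition tconst (R : realType) (n : nat) (c : \bar R) : 'rV[R]_n -> \bar R :=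
  fun _ => c.
Definition tvar (R : realType) (n : nat) (i : 'I_n) : 'rV[R]_n -> \bar R :=
  fun x => (x ord0 i)%:E.

Definition is_T (R : realType) (c : \bar R) : Prop := c <> +oo%E.

Definition tcongruence (R : realType) (n : nat)
  (E : ('rV[R]_n -> \bar R) -> ('rV[R]_n -> \bar R) -> Prop) : Prop :=
  (forall f g, E f g -> is_tfrac f /\ is_tfrac g) /\
  [/\ (forall f, is_tfrac f -> E f f),
      (forall f g, E f g -> E g f),
      (forall f g h, E f g -> E g h -> E f h),
      (forall f g f' g', E f g -> E f' g' -> E (toplus f f') (toplus g g')) &
      (forall f g f' g', E f g -> E f' g' -> E (totimes f f') (totimes g g'))].

Definition tvariety (R : realType) (n : nat)
  (E : ('rV[R]_n -> \bar R) -> ('rV[R]_n -> \bar R) -> Prop) : set 'rV[R]_n :=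
  [set x | forall f g, E f g -> f x = g x].

(* A T-algebra homomorphism  psi : T(X)/E -> T(Y)/F, given by a map Psi on
   representatives: psi (pi_E f) = pi_F (Psi f). *)
Definition tquot_hom (R : realType) (n m : nat)
  (E : ('rV[R]_n -> \bar R) -> ('rV[R]_n -> \bar R) -> Prop)
  (F : ('rV[R]_m -> \bar R) -> ('rV[R]_m -> \bar R) -> Prop)
  (Psi : ('rV[R]_n -> \bar R) -> ('rV[R]_m -> \bar R)) : Prop :=
  [/\ (forall f, is_tfrac f -> is_tfrac (Psi f)),
      (forall f g, E f g -> F (Psi f) (Psi g)),
      (forall f g, is_tfrac f -> is_tfrac g ->
         F (Psi (toplus f g)) (toplus (Psi f) (Psi g))),
      (forall f g, is_tfrac f -> is_tfrac g ->
         F (Psi (totimes f g)) (totimes (Psi f) (Psi g))) &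
      (forall c, is_T c -> F (Psi (@tconst R n c)) (@tconst R m c))].

Definition tquot_iso (R : realType) (n m : nat)
  (E : ('rV[R]_n -> \bar R) -> ('rV[R]_n -> \bar R) -> Prop)
  (F : ('rV[R]_m -> \bar R) -> ('rV[R]_m -> \bar R) -> Prop)
  (Psi : ('rV[R]_n -> \bar R) -> ('rV[R]_m -> \bar R)) : Prop :=
  [/\ tquot_hom E F Psi,
      (forall f g, is_tfrac f -> is_tfrac g -> F (Psi f) (Psi g) -> E f g) &
      (forall h, is_tfrac h -> exists2 f, is_tfrac f & F (Psi f) h)].

(* theta : W -> T^n, y |-> (psi(pi_E X_1)(y), ..., psi(pi_E X_n)(y)),
   stored as the vector of finite parts (finiteness is asserted separately). *)
Definition ttheta (R : realType) (n m : nat)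
  (Psi : ('rV[R]_n -> \bar R) -> ('rV[R]_m -> \bar R)) (y : 'rV[R]_m) : 'rV[R]_n :=
  \row_(i < n) fine (Psi (tvar i) y).

Definition homeo_via (R : realType) (m n : nat) (A : set 'rV[R]_m) (B : set 'rV[R]_n)
  (f : 'rV[R]_m -> 'rV[R]_n) : Prop :=
  exists g : 'rV[R]_n -> 'rV[R]_m,
    [/\ (forall y, A y -> B (f y) /\ g (f y) = y),
        (forall x, B x -> A (g x) /\ f (g x) = x),
        {within A, continuous f} &
        {within B, continuous g}].

(* A T-algebra homomorphism [Psi] is determined on [V(F)] by the point
   [theta y = (Psi X_1 (y), ..., Psi X_n (y))]: the maps [f |-> Psi f (y)] and
   [f |-> f (theta y)] both respect tropical sums, products and constants and
   agree on the variables, so they agree on polynomials and hence on quotients of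
   polynomials.  Consequently [theta] maps [V(F)] into [V(E)], and it is continuous
   because tropical fractions are continuous where finite ([Psi X_i] is finite on
   [V(F)] since [X_i X_i^-1 = 0]).  An inverse [Phi] of [Psi] gives
   [theta_Phi : V(E) -> V(F)], and evaluating [Psi (Phi Y_j) = Y_j] at [y] gives
   [theta_Phi (theta_Psi y) = y]; symmetrically for the other composite. *)

From HB Require Import structures.
From mathcomp Require Import all_boot all_order all_algebra.
From mathcomp Require Import all_classical all_reals all_analysis.
From mathcomp Require Import lra.
Import Order.TTheory GRing.Theory Num.Theory.
Import numFieldNormedType.Exports.
Local Open Scope classical_set_scope.
Local Open Scope ring_scope.

Lemma bigmaxe_addl (R : realDomainType) (I : Type) (s : seq I) (a : R)
    (F : I -> \bar R) :
  \big[maxe/-oo%E]_(t <- s) (a%:E + F t)%E =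
  (a%:E + \big[maxe/-oo%E]_(t <- s) F t)%E.
Proof.
elim: s => [|u s IH]; first by rewrite !big_nil addeNy.
by rewrite !big_cons IH adde_maxr.
Qed.

Lemma adde_eq0_fin_num (R : numDomainType) (a b : \bar R) :
  (a + b)%E = 0%E -> a != +oo%E -> b != +oo%E -> a \is a fin_num.
Proof. by case: a => [r| |]; case: b. Qed.

Lemma sumr_nseq (V : nmodType) (k : nat) (I : Type) (i : I) (F : I -> V) :
  \sum_(j <- nseq k i) F j = F i *+ k.
Proof. by elim: k => [|k IH]; rewrite ?big_nil // big_cons IH mulrS. Qed.

Lemma continuous_row (T : topologicalType) (K : numFieldType) m (G : T -> 'rV[K]_m) :
  (forall j, continuous (fun y => G y ord0 j)) -> continuous G.
Proof.
move=> cG y A /nbhs_ballP[e e0 eA].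
have near_j j : \forall z \near y, ball (G y ord0 j) e (G z ord0 j).
  by apply: (cG j y); exact: nbhsx_ballx.
suff : \forall z \near y, A (G z) by [].
near=> z; apply: eA; split => //.
have near_z : forall j, ball (G y ord0 j) e (G z ord0 j).
  by near: z; exact: filter_forall.
by move=> i j; rewrite (ord1 i); exact: near_z.
Unshelve. all: by end_near.
Qed.

Lemma continuous_within_row (T : topologicalType) (K : numFieldType) m (A : set T)
    (H : T -> 'rV[K]_m) :
  (forall j, exists G : T -> K, continuous G /\ forall y, A y -> G y = H y ord0 j) ->
  {within A, continuous H}.
Proof.
move=> /boolp.choice [G HG].
apply: (@subspace_eq_continuous _ _ _ (fun y => \row_j G j y)).
  move=> y; rewrite inE => Ay; apply/rowP => j.
  by rewrite mxE; case: (HG j) => _ ->.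
apply: continuous_subspaceT; apply: continuous_row => j.
by under eq_fun do rewrite mxE; case: (HG j).
Qed.

Section tropical_polynomials.
Context {R : realType} {n : nat}.
Implicit Types (p q : tpoly R n) (x : 'rV[R]_n) (f g h : 'rV[R]_n -> \bar R).

Definition meval (t : R * ('I_n -> nat)) x : R :=
  t.1 + \sum_(i < n) (t.2 i)%:R * x ord0 i.

Definition mmul (s t : R * ('I_n -> nat)) : R * ('I_n -> nat) :=
  (s.1 + t.1, fun i => (s.2 i + t.2 i)%N).

Definition pmul p q : tpoly R n := [seq mmul s t | s <- p, t <- q].

Definition tpolyC (c : R) : tpoly R n := [:: (c, fun=> 0%N)].

Definition tpolyX (i : 'I_n) : tpoly R n := [:: (0, fun j => (j == i) : nat)].

Definition tvarV (i : 'I_n) : 'rV[R]_n -> \bar R := fun x => (- x ord0 i)%:E.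

Lemma peval_nil x : peval ([::] : tpoly R n) x = -oo%E.
Proof. exact: big_nil. Qed.

Lemma peval_cons t p x : peval (t :: p) x = maxe (meval t x)%:E (peval p x).
Proof. exact: big_cons. Qed.

Lemma peval_seq1 t x : peval [:: t] x = (meval t x)%:E.
Proof. by rewrite peval_cons peval_nil maxeNy. Qed.

Lemma peval_cat p q x : peval (p ++ q) x = maxe (peval p x) (peval q x).
Proof. exact: big_cat. Qed.

Lemma peval_cons_fin_num t p x : peval (t :: p) x \is a fin_num.
Proof.
elim: p t => [|s p IH] t; first by rewrite peval_seq1.
by rewrite peval_cons -(fineK (IH s)) -EFin_max.
Qed.

Lemma peval_NyVfin_num p x : peval p x = -oo%E \/ peval p x \is a fin_num.
Proof.
by case: p => [|t p]; [left; exact: peval_nil|right; exact: peval_cons_fin_num].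
Qed.

Lemma meval_mul s t x : meval (mmul s t) x = meval s x + meval t x.
Proof.
rewrite /meval /=; under eq_bigr do rewrite natrD mulrDl.
rewrite big_split /=; lra.
Qed.

Lemma peval_pmul p q x : peval (pmul p q) x = (peval p x + peval q x)%E.
Proof.
rewrite /peval big_allpairs_dep; elim: p => [|s p IH]; first by rewrite !big_nil.
rewrite !big_cons IH adde_maxl; congr maxe.
under eq_bigr do rewrite -/(meval _ x) meval_mul EFinD.
by rewrite bigmaxe_addl.
Qed.

Lemma peval_tpolyC c x : peval (tpolyC c) x = c%:E.
Proof. by rewrite peval_seq1 /meval big1 ?addr0 // => i _; rewrite mul0r. Qed.

Lemma peval_tpolyX i x : peval (tpolyX i) x = (x ord0 i)%:E.
Proof.
rewrite peval_seq1 /meval /= (bigD1 i) //= eqxx mul1r add0r big1 ?addr0 //.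
by move=> j /negbTE ->; rewrite mul0r.
Qed.

Lemma is_tfrac_peval p : is_tfrac (peval p).
Proof. by exists p, (tpolyC 0); split => // x; rewrite peval_tpolyC sube0. Qed.

Lemma is_tfracP {h} : is_tfrac h ->
  exists p t q, forall x, h x = (peval p x - peval (t :: q) x)%E.
Proof. by case=> p [[|t q] [//]] Eh; exists p, t, q. Qed.

Lemma tfrac_neq_pinfty h x : is_tfrac h -> h x != +oo%E.
Proof.
move=> /is_tfracP [p [t [q ->]]]; rewrite -(fineK (peval_cons_fin_num t q x)).
by case: (peval_NyVfin_num p x) => [->|/fineK <-].
Qed.

Lemma is_tfrac_const c : is_T c -> is_tfrac (@tconst R n c).
Proof.
case: c => [r| |] // _.
  by exists (tpolyC r), (tpolyC 0); split => // x; rewrite !peval_tpolyC sube0.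
by exists [::], (tpolyC 0); split => // x; rewrite peval_tpolyC peval_nil.
Qed.

Lemma is_tfrac_var i : is_tfrac (@tvar R n i).
Proof.
exists (tpolyX i), (tpolyC 0); split => // x.
by rewrite peval_tpolyC sube0 peval_tpolyX.
Qed.

Lemma is_tfrac_varV i : is_tfrac (tvarV i).
Proof.
exists (tpolyC 0), (tpolyX i); split => // x.
by rewrite peval_tpolyC peval_tpolyX sub0e.
Qed.

Lemma totimes_varV i : totimes (tvar i) (tvarV i) = tconst 0%E.
Proof. by apply/funext => x; rewrite /totimes /tvar /tvarV /tconst -EFinD subrr. Qed.

Lemma is_tfrac_times f g : is_tfrac f -> is_tfrac g -> is_tfrac (totimes f g).
Proof.
move=> /is_tfracP [p [t [q Ef]]] /is_tfracP [p' [t' [q' Eg]]].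
exists (pmul p p'), (pmul (t :: q) (t' :: q')); split => // x.
rewrite /totimes Ef Eg !peval_pmul.
rewrite -(fineK (peval_cons_fin_num t q x)) -(fineK (peval_cons_fin_num t' q' x)).
case: (peval_NyVfin_num p x) => [->|/fineK <-] //.
case: (peval_NyVfin_num p' x) => [->|/fineK <-] //.
by rewrite -!EFinD; congr EFin; lra.
Qed.

(* [a/b (+) c/d = (a d (+) c b) / (b d)], the denominators being finite. *)
Lemma is_tfrac_plus f g : is_tfrac f -> is_tfrac g -> is_tfrac (toplus f g).
Proof.
move=> /is_tfracP [p [t [q Ef]]] /is_tfracP [p' [t' [q' Eg]]].
exists (pmul p (t' :: q') ++ pmul p' (t :: q)), (pmul (t :: q) (t' :: q')).
split => // x; rewrite /toplus Ef Eg peval_cat !peval_pmul.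
rewrite -(fineK (peval_cons_fin_num t q x)) -(fineK (peval_cons_fin_num t' q' x)).
case: (peval_NyVfin_num p x) => [->|/fineK <-];
  case: (peval_NyVfin_num p' x) => [->|/fineK <-] //=;
  rewrite ?addNye ?maxNye ?maxeNy -!EFinD -?EFin_max -?EFinD; congr EFin; try lra.
by rewrite addr_maxl; congr Num.max; lra.
Qed.

Lemma peval_ind (P : ('rV[R]_n -> \bar R) -> Prop) :
  (forall c, is_T c -> P (tconst c)) ->
  (forall i, P (tvar i)) ->
  (forall f g, is_tfrac f -> is_tfrac g -> P f -> P g -> P (toplus f g)) ->
  (forall f g, is_tfrac f -> is_tfrac g -> P f -> P g -> P (totimes f g)) ->
  forall p, P (peval p).
Proof.
move=> Pconst Pvar Pplus Ptimes.
pose Q h := is_tfrac h /\ P h.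
have Qconst c : is_T c -> Q (tconst c).
  by move=> Tc; split; [exact: is_tfrac_const|exact: Pconst].
have Qplus f g : Q f -> Q g -> Q (toplus f g).
  by move=> [tf Pf] [tg Pg]; split; [exact: is_tfrac_plus|exact: Pplus].
have Qtimes f g : Q f -> Q g -> Q (totimes f g).
  by move=> [tf Pf] [tg Pg]; split; [exact: is_tfrac_times|exact: Ptimes].
have Qword c (s : seq 'I_n) : Q (fun x => (c + \sum_(j <- s) x ord0 j)%:E).
  elim: s => [|j s IH].
    have -> : (fun x => (c + \sum_(j <- [::]) x ord0 j)%:E) = tconst c%:E.
      by apply/funext => x; rewrite big_nil addr0.
    exact: Qconst.
  have -> : (fun x => (c + \sum_(k <- j :: s) x ord0 k)%:E) =
      totimes (fun x => (c + \sum_(k <- s) x ord0 k)%:E) (tvar j).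
    by apply/funext => x; rewrite big_cons /totimes /tvar -EFinD addrCA addrC.
  by apply: Qtimes IH _; split; [exact: is_tfrac_var|exact: Pvar].
(* [c X^a] is the word [c X_i1 ... X_ik] in which each [i] occurs [a i] times *)
have Qmonomial t : Q (peval [:: t]).
  case: t => c a.
  pose word := flatten [seq nseq (a i) i | i <- index_enum 'I_n].
  have -> : peval [:: (c, a)] = fun x => (c + \sum_(j <- word) x ord0 j)%:E.
    apply/funext => x; rewrite peval_seq1 big_flatten big_map /meval /=.
    by congr (_ + _)%:E; apply: eq_bigr => i _; rewrite sumr_nseq mulr_natl.
  exact: Qword.
suff Qpoly p : Q (peval p) by move=> p; case: (Qpoly p).
elim: p => [|t p IH].
  have -> : peval ([::] : tpoly R n) = tconst -oo%E.
    by apply/funext => x; rewrite peval_nil.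
  exact: Qconst.
have -> : peval (t :: p) = toplus (peval [:: t]) (peval p).
  by apply/funext => x; rewrite /toplus peval_cons peval_seq1.
exact: Qplus.
Qed.

Lemma meval_continuous (t : R * ('I_n -> nat)) : continuous (meval t).
Proof.
move=> x; apply: continuousD; first exact: cst_continuous.
apply: (continuous_big add_continuous) => i _ y.
apply: (continuousM (s := fun=> _)); first exact: cst_continuous.
exact: coord_continuous.
Qed.

Lemma peval_fine_continuous (p : tpoly R n) : continuous (fun x => fine (peval p x)).
Proof.
case: p => [|t p].
  by under eq_fun do rewrite peval_nil; exact: cst_continuous.
elim: p t => [|s p IH] t.
  by under eq_fun do rewrite peval_seq1; exact: meval_continuous.
have -> : (fun x => fine (peval [:: t, s & p] x)) =
    meval t \max (fun x => fine (peval (s :: p) x)).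
  apply/funext => x.
  by rewrite peval_cons -(fineK (peval_cons_fin_num s p x)) -EFin_max.
by apply: max_fun_continuous; [exact: meval_continuous|exact: IH].
Qed.

Lemma tfrac_fine_continuous {h : 'rV[R]_n -> \bar R} : is_tfrac h ->
  exists G : 'rV[R]_n -> R,
    continuous G /\ forall x, h x \is a fin_num -> G x = fine (h x).
Proof.
move=> /is_tfracP [p [t [q Eh]]].
exists ((fun x => fine (peval p x)) - (fun x => fine (peval (t :: q) x))); split.
  by move=> x; apply: continuousB; exact: peval_fine_continuous.
move=> x; rewrite Eh -(fineK (peval_cons_fin_num t q x)).
by case: (peval_NyVfin_num p x) => [->|/fineK <-].
Qed.

End tropical_polynomials.

Section tropical_homomorphism.
Context {R : realType} {n m : nat}
  {E : ('rV[R]_n -> \bar R) -> ('rV[R]_n -> \bar R) -> Prop}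
  {F : ('rV[R]_m -> \bar R) -> ('rV[R]_m -> \bar R) -> Prop}
  {Psi : ('rV[R]_n -> \bar R) -> ('rV[R]_m -> \bar R)}.
Hypothesis homPsi : tquot_hom E F Psi.

Lemma tquot_hom_var_fin_num y i : tvariety F y -> Psi (tvar i) y \is a fin_num.
Proof.
move=> Wy; have [Psi_tfrac _ _ Psi_times Psi_const] := homPsi.
have T0 : is_T (0%E : \bar R) by [].
have := Wy _ _ (Psi_times _ _ (is_tfrac_var i) (is_tfrac_varV i)).
rewrite totimes_varV (Wy _ _ (Psi_const _ T0)) => /esym sum0.
by apply: adde_eq0_fin_num sum0 _ _; apply/tfrac_neq_pinfty/Psi_tfrac;
  [exact: is_tfrac_var|exact: is_tfrac_varV].
Qed.

Lemma tquot_hom_eval y f : tvariety F y -> is_tfrac f ->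
  Psi f y = f (ttheta Psi y).
Proof.
move=> Wy tf; have [_ _ Psi_plus Psi_times Psi_const] := homPsi.
have Psi_peval p : Psi (peval p) y = peval p (ttheta Psi y).
  apply: (peval_ind (fun h => Psi h y = h (ttheta Psi y))).
  - by move=> c Tc; rewrite (Wy _ _ (Psi_const c Tc)).
  - by move=> i; rewrite /tvar mxE fineK //; exact: tquot_hom_var_fin_num.
  - by move=> g h tg th Eg Eh; rewrite (Wy _ _ (Psi_plus g h tg th)) /toplus Eg Eh.
  - by move=> g h tg th Eg Eh; rewrite (Wy _ _ (Psi_times g h tg th)) /totimes Eg Eh.
have [p [t [q Ef]]] := is_tfracP tf.
have fq_p : totimes f (peval (t :: q)) = peval p.
  by apply/funext => x; rewrite /totimes Ef subeK // peval_cons_fin_num.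
have := Psi_peval p; rewrite -{1}fq_p (Wy _ _ (Psi_times _ _ tf (is_tfrac_peval _))).
rewrite Ef /totimes Psi_peval => <-.
by rewrite addeK // peval_cons_fin_num.
Qed.

Lemma ttheta_variety y : tcongruence E -> tvariety F y -> tvariety E (ttheta Psi y).
Proof.
move=> [E_tfrac _] Wy f g Efg; have [tf tg] := E_tfrac f g Efg.
rewrite -!tquot_hom_eval //; apply: Wy.
by case: homPsi => _ + _ _ _; apply.
Qed.

Lemma ttheta_continuous : {within tvariety F, continuous (ttheta Psi)}.
Proof.
apply: continuous_within_row => i.
have [Psi_tfrac _ _ _ _] := homPsi.
have [G [cG EG]] := tfrac_fine_continuous (Psi_tfrac _ (is_tfrac_var i)).
exists G; split => // y Wy; rewrite mxE; apply: EG.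
exact: tquot_hom_var_fin_num.
Qed.

Lemma tthetaK (Phi : ('rV[R]_m -> \bar R) -> ('rV[R]_n -> \bar R)) y :
  (forall h, is_tfrac h -> is_tfrac (Phi h)) ->
  (forall h, is_tfrac h -> F (Psi (Phi h)) h) ->
  tvariety F y -> ttheta Phi (ttheta Psi y) = y.
Proof.
move=> Phi_tfrac PsiK Wy; apply/rowP => j.
rewrite mxE -tquot_hom_eval //; last exact/Phi_tfrac/is_tfrac_var.
by rewrite (Wy _ _ (PsiK _ (is_tfrac_var j))).
Qed.

End tropical_homomorphism.

Lemma tquot_iso_inverse {R : realType} {n m : nat}
    {E : ('rV[R]_n -> \bar R) -> ('rV[R]_n -> \bar R) -> Prop}
    {F : ('rV[R]_m -> \bar R) -> ('rV[R]_m -> \bar R) -> Prop}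
    {Psi : ('rV[R]_n -> \bar R) -> ('rV[R]_m -> \bar R)} :
  tcongruence F -> tquot_iso E F Psi ->
  exists Phi, [/\ tquot_hom F E Phi,
    forall f, is_tfrac f -> E (Phi (Psi f)) f &
    forall h, is_tfrac h -> F (Psi (Phi h)) h].
Proof.
move=> [F_tfrac [F_refl F_sym F_trans F_plus F_times]].
move=> [[Psi_tfrac _ Psi_plus Psi_times Psi_const] Psi_inj Psi_surj].
have /boolp.choice [Phi PhiP] :
    forall h, exists f, is_tfrac h -> is_tfrac f /\ F (Psi f) h.
  move=> h; have [th|nth] := pselect (is_tfrac h).
    by have [f tf Ef] := Psi_surj h th; exists f.
  by exists (tconst 0%E) => /nth.
have Phi_tfrac h : is_tfrac h -> is_tfrac (Phi h) by move=> /PhiP [].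
have PsiK h : is_tfrac h -> F (Psi (Phi h)) h by move=> /PhiP [].
have E_of_common f g k :
    is_tfrac f -> is_tfrac g -> F (Psi f) k -> F (Psi g) k -> E f g.
  by move=> tf tg Fk Gk; apply: Psi_inj => //; exact: F_trans Fk (F_sym _ _ Gk).
exists Phi; split => //.
- split => //.
  + move=> h h' Fhh'; have [th th'] := F_tfrac _ _ Fhh'.
    apply: (E_of_common _ _ h (Phi_tfrac _ th) (Phi_tfrac _ th') (PsiK _ th)).
    exact: F_trans (PsiK _ th') (F_sym _ _ Fhh').
  + move=> h h' th th'; have tPhih := Phi_tfrac _ th; have tPhih' := Phi_tfrac _ th'.
    have th_plus := is_tfrac_plus _ _ th th'.
    apply: (E_of_common _ _ _ (Phi_tfrac _ th_plus)
      (is_tfrac_plus _ _ tPhih tPhih') (PsiK _ th_plus)).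
    apply: F_trans (Psi_plus _ _ tPhih tPhih') _.
    exact: F_plus (PsiK _ th) (PsiK _ th').
  + move=> h h' th th'; have tPhih := Phi_tfrac _ th; have tPhih' := Phi_tfrac _ th'.
    have th_times := is_tfrac_times _ _ th th'.
    apply: (E_of_common _ _ _ (Phi_tfrac _ th_times)
      (is_tfrac_times _ _ tPhih tPhih') (PsiK _ th_times)).
    apply: F_trans (Psi_times _ _ tPhih tPhih') _.
    exact: F_times (PsiK _ th) (PsiK _ th').
  + move=> c Tc; have tc : is_tfrac (@tconst R m c) by exact: is_tfrac_const.
    by apply: E_of_common (Phi_tfrac _ tc) _ (PsiK _ tc) (Psi_const _ Tc);
      exact: is_tfrac_const.
- move=> f tf; have tPsif := Psi_tfrac _ tf.
  exact: E_of_common (Phi_tfrac _ tPsif) tf (PsiK _ tPsif) (F_refl _ tPsif).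
Qed.

Theorem corollary3p20 (R : realType) (n m : nat)
  (E : ('rV[R]_n -> \bar R) -> ('rV[R]_n -> \bar R) -> Prop)
  (F : ('rV[R]_m -> \bar R) -> ('rV[R]_m -> \bar R) -> Prop)
  (Psi : ('rV[R]_n -> \bar R) -> ('rV[R]_m -> \bar R)) :
  tcongruence E -> tcongruence F -> tquot_iso E F Psi ->
  (forall y, tvariety F y -> forall i : 'I_n, Psi (tvar i) y \is a fin_num) /\
  homeo_via (tvariety F) (tvariety E) (ttheta Psi).
Proof.
move=> congE congF isoPsi.
have [Phi [homPhi PhiK PsiK]] := tquot_iso_inverse congF isoPsi.
have [homPsi _ _] := isoPsi.
have [Psi_tfrac _ _ _ _] := homPsi; have [Phi_tfrac _ _ _ _] := homPhi.
split; first by move=> y Wy i; exact: tquot_hom_var_fin_num homPsi y i Wy.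
exists (ttheta Phi); split.
- move=> y Wy; split; first exact: ttheta_variety homPsi y congE Wy.
  exact: tthetaK homPsi Phi y Phi_tfrac PsiK Wy.
- move=> x Vx; split; first exact: ttheta_variety homPhi x congF Vx.
  exact: tthetaK homPhi Psi x Psi_tfrac PhiK Vx.
- exact: ttheta_continuous homPsi.
- exact: ttheta_continuous homPhi.
Qed.
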